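(* Under the hypotheses and notation of the preceding statement (Theorem 1), with $\tilde L_n,\tilde U_n$ defined by the recursion there, the following hold almost surely for every $n\ge1$: $$0\le\tilde L_{n-1}\le\tilde L_n\le\tilde U_n\le\tilde U_{n-1}\le1,\qquad \tilde U_n-\tilde L_n=(\tilde U_{n-1}-\tilde L_{n-1})\,\frac{U_n-L_n}{U_n^*-L_n^*},$$ and moreover $\mathbb{E}\tilde L_n=\mathbb{E}L_n=l_n$ and $\mathbb{E}\tilde U_n=\mathbb{E}U_n=u_n$ for every $n\ge1$.
   Context: Setting: $s\in[0,1]$; random variables $L_n,U_n$ ($n\ge1$), $L_0\equiv0$, $U_0\equiv1$; $\mathcal{F}_0$ trivial, $\mathcal{F}_n=\sigma\{L_n,U_n\}$, $\mathcal{F}_{k,\infty}=\sigma\{\mathcal{F}_k,\mathcal{F}_{k+1},\dots\}$; a.s. $L_n\le U_n$, $L_n,U_n\in[0,1]$; $\mathbb{E}L_n=l_n\nearrow s$, $\mathbb{E}U_n=u_n\searrow s$; $\mathbb{E}(L_{n-1}\mid\mathcal{F}_{n,\infty})=\mathbb{E}(L_{n-1}\mid\mathcal{F}_n)\le L_n$ and $\mathbb{E}(U_{n-1}\mid\mathcal{F}_{n,\infty})=\mathbb{E}(U_{n-1}\mid\mathcal{F}_n)\ge U_n$ a.s.; $L_n^*=\mathbb{E}(L_{n-1}\mid\mathcal{F}_n)$, $U_n^*=\mathbb{E}(U_{n-1}\mid\mathcal{F}_n)$ with $U_n^*>L_n^*$ a.s.; $\tilde L_0=0$, $\tilde U_0=1$,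 $\tilde L_n=\tilde L_{n-1}+\frac{L_n-L_n^*}{U_n^*-L_n^*}(\tilde U_{n-1}-\tilde L_{n-1})$, $\tilde U_n=\tilde U_{n-1}-\frac{U_n^*-U_n}{U_n^*-L_n^*}(\tilde U_{n-1}-\tilde L_{n-1})$. *)

From HB Require Import structures.
From mathcomp Require Import all_boot all_order all_algebra.
From mathcomp Require Import all_classical all_reals all_analysis.
Set Implicit Arguments. Unset Strict Implicit. Unset Printing Implicit Defensive.
Import Order.TTheory GRing.Theory Num.Theory.
Local Open Scope classical_set_scope.
Local Open Scope ring_scope.

Section defs.
Context {d : measure_display} {T : measurableType d} {R : realType}.

Definition gen_sigma (fs : set (T -> R)) : set (set T) :=
  <<s [set A | exists f, fs f /\ exists B : set R, measurable B /\ A = f @^-1` B] >>.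

Definition Fn (L U : nat -> T -> R) (n : nat) : set (set T) :=
  gen_sigma [set f | f = L n \/ f = U n].

Definition Ftail (L U : nat -> T -> R) (n : nat) : set (set T) :=
  gen_sigma [set f | exists k, (n <= k)%N /\ (f = L k \/ f = U k)].

Definition G_measurable (G : set (set T)) (Y : T -> R) : Prop :=
  forall B : set R, measurable B -> G (Y @^-1` B).

Definition is_cond_exp (P : probability T R) (G : set (set T)) (X Y : T -> R) : Prop :=
  [/\ G_measurable G Y, P.-integrable setT (EFin \o Y) &
      forall A, G A -> (\int[P]_(x in A) (Y x)%:E = \int[P]_(x in A) (X x)%:E)%E].

(* the recursion defining (tilde L_n, tilde U_n), given L*_n = Ls n, U*_n = Us n *)
Fixpoint tildeLU (L U Ls Us : nat -> T -> R) (n : nat) : (T -> R) * (T -> R) :=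
  match n with
  | 0 => (fun _ => 0, fun _ => 1)
  | m.+1 =>
    let p := tildeLU L U Ls Us m in
    (fun x => p.1 x + (L m.+1 x - Ls m.+1 x) / (Us m.+1 x - Ls m.+1 x) * (p.2 x - p.1 x),
     fun x => p.2 x - (Us m.+1 x - U m.+1 x) / (Us m.+1 x - Ls m.+1 x) * (p.2 x - p.1 x))
  end.

Definition tildeL L U Ls Us n := (tildeLU L U Ls Us n).1.
Definition tildeU L U Ls Us n := (tildeLU L U Ls Us n).2.

End defs.

From HB Require Import structures.
From mathcomp Require Import all_boot all_order all_algebra.
From mathcomp Require Import all_classical all_reals all_analysis.
From mathcomp Require Import ring lra zify.
From mathcomp Require Import measurable_realfun.

Set Implicit Arguments. Unset Strict Implicit. Unset Printing Implicit Defensive.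
Import Order.TTheory GRing.Theory Num.Theory.
Local Open Scope classical_set_scope.
Local Open Scope ring_scope.

(* For the expectations one shows by induction on [n]
   the stronger fact that [tL n] and [L n] (resp. [tU n] and [U n]) have the
   same integral against every [Ftail n]-measurable weight with values in
   [0,1].  The increment [tL n - tL n.-1] is such a weight times
   [tU n.-1 - tL n.-1]: the induction hypothesis replaces this gap by
   [U n.-1 - L n.-1], the conditional expectation property replaces that by
   [Us n - Ls n], and the weight times [Us n - Ls n] is [L n - Ls n].
   The conditional expectation property is extended from indicators of
   [Ftail n]-sets to such weights by a uniform staircase approximation. *)

Lemma divr_itv01 {R : realFieldType} (x y : R) : 0 <= x <= y -> 0 < y -> 0 <= x / y <= 1.
Proof.
move=> /andP[x0 xy] y0; apply/andP; split; first by rewrite divr_ge0 // ltW.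
by rewrite ler_pdivrMr // mul1r.
Qed.

Section tilde_step.
Context {R : realFieldType} {l u ls us tl tu : R}.
Hypotheses (lsl : ls <= l) (lu : l <= u) (uus : u <= us) (lsus : ls < us).
Let a := (l - ls) / (us - ls).
Let b := (us - u) / (us - ls).
Let tl' := tl + a * (tu - tl).
Let tu' := tu - b * (tu - tl).

Lemma tilde_step_ratio_itv01 : 0 <= a <= 1 /\ 0 <= b <= 1.
Proof.
have us_ls : 0 < us - ls by rewrite subr_gt0.
by split; apply: divr_itv01 => //; move: lsl lu uus; lra.
Qed.

Lemma tilde_step_gap : tu' - tl' = (tu - tl) * ((u - l) / (us - ls)).
Proof. by rewrite /tu' /tl' /a /b; field; rewrite subr_eq0 gt_eqF. Qed.

Lemma tilde_step_mono : 0 <= tl <= tu -> tu <= 1 ->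
  [/\ 0 <= tl, tl <= tl', tl' <= tu', tu' <= tu & tu <= 1].
Proof.
move=> /andP[tl0 tltu] tu1; have [/andP[a0 _] /andP[b0 _]] := tilde_step_ratio_itv01.
have gap0 : 0 <= tu - tl by rewrite subr_ge0.
split=> //.
- by rewrite lerDl mulr_ge0.
- rewrite -subr_ge0 tilde_step_gap mulr_ge0 // divr_ge0 // subr_ge0 //; exact: ltW.
- by rewrite lerBlDr lerDl mulr_ge0.
Qed.

End tilde_step.

Lemma measurable_inv {R : realType} : measurable_fun [set: R] GRing.inv.
Proof.
have nz_open : open ([set x | x != 0] : set R).
  rewrite (_ : [set x | x != 0] = ~` [set 0]); last by apply/seteqP; split => x /= /eqP.
  exact/closed_openC/accessible_closed_set1/hausdorff_accessible/Rhausdorff.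
rewrite (_ : [set: R] = [set x | x != 0] `|` [set 0]); last first.
  by apply/seteqP; split => x //= _; case: (eqVneq x 0) => [->|]; [right|left].
apply/measurable_funU => //; first exact: open_measurable.
split; last exact: measurable_fun_set1.
apply: open_continuous_measurable_fun => // x /set_mem; exact: inv_continuous.
Qed.

Lemma measurable_fun_ratio {d} {T : measurableType d} {R : realType} (f g : T -> R) :
  measurable_fun [set: T] f -> measurable_fun [set: T] g ->
  measurable_fun [set: T] (fun x => f x / g x).
Proof.
by move=> mf mg; apply: measurable_funM => //; apply: measurableT_comp mg; exact: measurable_inv.
Qed.

Definition clamp01 {R : realDomainType} (y : R) := Num.min (Num.max y 0) 1.

Lemma clamp01_itv {R : realDomainType} (y : R) : 0 <= clamp01 y <= 1.
Proof. by rewrite /clamp01 le_min ler01 le_max lexx orbT ge_min lexx orbT. Qed.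

Lemma clamp01_id {R : realDomainType} (y : R) : 0 <= y <= 1 -> clamp01 y = y.
Proof. by move=> /andP[y0 y1]; rewrite /clamp01 (max_idPl y0) (min_idPl y1). Qed.

Lemma measurable_fun_clamp01 {d} {T : measurableType d} {R : realType} (f : T -> R) :
  measurable_fun [set: T] f -> measurable_fun [set: T] (fun x => clamp01 (f x)).
Proof.
move=> mf; apply: measurable_minr (measurable_cst _).
exact: measurable_maxr mf (measurable_cst _).
Qed.

Definition stair {R : realType} (K : nat) (y : R) : R := (Num.truncn (K%:R * y))%:R / K%:R.

Lemma stair_approx {R : realType} K (y : R) : (0 < K)%N -> 0 <= y ->
  0 <= y - stair K y <= K%:R^-1.
Proof.
move=> K0 y0; have K0' : (0 : R) < K%:R by rewrite ltr0n.
have /andP[tl tg] := truncn_itv (mulr_ge0 (ler0n R K) y0).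
rewrite -natr1 in tg.
rewrite /stair (_ : y - _ = K%:R^-1 * (K%:R * y - (Num.truncn (K%:R * y))%:R)); last first.
  by field; rewrite gt_eqF.
rewrite mulr_ge0 ?invr_ge0 ?ler0n ?subr_ge0 //= ler_piMr ?invr_ge0 ?ler0n //; lra.
Qed.

Lemma stair_ge0 {R : realType} K (y : R) : 0 <= stair K y.
Proof. by rewrite /stair divr_ge0. Qed.

Lemma sum_ord_ltn {R : realType} (K m : nat) :
  \sum_(j < K) ((j < m)%N)%:R = (minn K m)%:R :> R.
Proof.
elim: K => [|K IH]; first by rewrite big_ord0 min0n.
rewrite big_ord_recr /= IH; case: (ltnP K m) => hK.
  by rewrite -natrD addn1 !minnE; congr (_%:R); lia.
by rewrite addr0 !minnE; congr (_%:R); lia.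
Qed.

Lemma stair_sum {R : realType} K (y : R) : (0 < K)%N -> 0 <= y <= 1 ->
  stair K y = K%:R^-1 * \sum_(j < K) ((j.+1)%:R / K%:R <= y :> R)%:R.
Proof.
move=> K0 /andP[y0 y1]; have K0' : (0 : R) < K%:R by rewrite ltr0n.
have Ky0 : 0 <= K%:R * y by rewrite mulr_ge0.
have truncK : (Num.truncn (K%:R * y) <= K)%N.
  by rewrite truncn_le_nat (@le_lt_trans _ _ K%:R) ?ltr_nat // ler_piMr.
under eq_bigr => j _ do rewrite ler_pdivrMr // mulrC -truncn_ge_nat //.
by rewrite sum_ord_ltn (minn_idPr truncK) mulrC.
Qed.

Lemma le_inv_nat_mul_eq0 {R : archiRealFieldType} (x c : R) : 0 <= x ->
  (forall K, (0 < K)%N -> x <= K%:R^-1 * c) -> x = 0.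
Proof.
move=> x0 small; apply/eqP; rewrite eq_le x0 andbT leNgt; apply/negP => xpos.
have := small (Num.truncn (c / x)).+1 isT.
rewrite mulrC ler_pdivlMr ?ltr0n // mulrC -ler_pdivlMr // leNgt => /negP; apply.
exact: truncnS_gt.
Qed.

Section probability_integration.
Context d (T : measurableType d) (R : realType) (P : probability T R).
Implicit Types (f g h : T -> R) (M : R).

Lemma integrable_bounded_ae f M : measurable_fun [set: T] f ->
  {ae P, forall x, `|f x| <= M} -> P.-integrable [set: T] (EFin \o f).
Proof.
move=> mf fM; apply/integrableP; split; first exact/measurable_EFinP.
apply: (@le_lt_trans _ _ ((`|M| + 1)%:E * P setT)%E).
  apply: integral_le_bound => //; first exact/measurable_EFinP.
  apply: filterS fM => x fxM _ /=; rewrite lee_fin (le_trans fxM) //.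
  by rewrite (le_trans (ler_norm _)) // lerDl.
by rewrite probability_setT mule1 ltry.
Qed.

Lemma integrable_bounded_mul h f M : measurable_fun [set: T] h ->
  (forall x, `|h x| <= M) -> P.-integrable [set: T] (EFin \o f) ->
  P.-integrable [set: T] (EFin \o (fun x => h x * f x)).
Proof.
move=> mh hM if_; have hbd : [bounded h x | x in [set: T]].
  by exists M; split; [exact: num_real|move=> y My x _; exact: le_trans (hM x) (ltW My)].
by apply: eq_integrable (integrableMr measurableT mh hbd if_) => // x _ /=; rewrite EFinM.
Qed.

Lemma integrable_subr f g : P.-integrable [set: T] (EFin \o f) ->
  P.-integrable [set: T] (EFin \o g) -> P.-integrable [set: T] (EFin \o (fun x => f x - g x)).
Proof.
by move=> if_ ig; apply: eq_integrable (integrableB measurableT if_ ig).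
Qed.

Lemma Rintegral_ae_eq f g : measurable_fun [set: T] f -> measurable_fun [set: T] g ->
  {ae P, forall x, f x = g x} -> \int[P]_x f x = \int[P]_x g x.
Proof.
move=> mf mg fg; congr fine; apply: ae_eq_integral => //;
  [exact/measurable_EFinP..|].
by apply: filterS fg => x /= ->.
Qed.

Lemma expectation_Rintegral f : P.-integrable [set: T] (EFin \o f) ->
  ('E_P[f] = (\int[P]_x f x)%:E)%E.
Proof. by move=> if_; rewrite unlock fineK // integrable_fin_num. Qed.

End probability_integration.

Section cond_exp_weighted.
Context d (T : measurableType d) (R : realType) (P : probability T R).
Variables (G : set (set T)) (X Y : T -> R).
Hypotheses (G_meas : G `<=` measurable) (iX : P.-integrable [set: T] (EFin \o X))
  (XY : is_cond_exp P G X Y).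

Let iY : P.-integrable [set: T] (EFin \o Y). Proof. by case: XY. Qed.
Let Z x := Y x - X x.
Let iZ : P.-integrable [set: T] (EFin \o Z). Proof. exact: integrable_subr. Qed.

Let integrable_indic_sum_mul (A : nat -> set T) n : (forall j, G (A j)) ->
  P.-integrable [set: T] (EFin \o (fun x => (\sum_(j < n) \1_(A j) x) * Z x)).
Proof.
move=> GA; apply: (integrable_bounded_mul (M := n%:R)) iZ.
  by apply: measurable_sum => j; apply/measurable_indicP; exact: G_meas.
move=> x; apply: le_trans (ler_norm_sum _ _ _) _.
rewrite -[n in n%:R]card_ord -sumr_const; apply: ler_sum => j _.
by rewrite indicE; case: (_ \in _); rewrite ?normr1 ?normr0.
Qed.

Lemma cond_exp_indic A : G A -> \int[P]_x (\1_A x * Z x) = 0.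
Proof.
move=> GA; have mA := G_meas GA; have [_ _ /(_ A GA) YX] := XY.
transitivity (\int[P]_(x in A) Z x).
  by rewrite [RHS]Rintegral_mkcond patch_indic; apply: eq_Rintegral => x _ /=; rewrite mulrC.
rewrite RintegralB //; try exact: integrableS iY; try exact: integrableS iX.
by rewrite /Rintegral YX subrr.
Qed.

Lemma cond_exp_indic_sum (A : nat -> set T) n : (forall j, G (A j)) ->
  \int[P]_x ((\sum_(j < n) \1_(A j) x) * Z x) = 0.
Proof.
move=> GA; elim: n => [|n IH].
  by under eq_Rintegral do rewrite big_ord0 mul0r; rewrite Rintegral_cst // mul0r.
under eq_Rintegral do rewrite big_ord_recr /= mulrDl.
rewrite RintegralD ?IH ?cond_exp_indic ?addr0 //; first exact: integrable_indic_sum_mul.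
apply: (integrable_bounded_mul (M := 1)) iZ; first exact/measurable_indicP/G_meas.
by move=> x; rewrite indicE; case: (_ \in _); rewrite ?normr1 ?normr0.
Qed.

Let measurable_G (h : T -> R) : G_measurable G h -> measurable_fun [set: T] h.
Proof. by move=> hG _ B mB; rewrite setTI; exact/G_meas/hG. Qed.

Let stair_indicE (h : T -> R) K x : (0 < K)%N -> 0 <= h x <= 1 ->
  stair K (h x) = K%:R^-1 * \sum_(j < K) \1_(h @^-1` `[(j.+1)%:R / K%:R, +oo[) x.
Proof.
move=> K0 hx01; rewrite (stair_sum K0 hx01); congr (_ * _).
apply: eq_bigr => j _; rewrite indicE; congr (nat_of_bool _)%:R.
by apply/idP/idP => [?|/set_mem]; [apply/mem_set|]; rewrite /= in_itv /= andbT.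
Qed.

Let measurable_stair (h : T -> R) K : G_measurable G h -> (forall x, 0 <= h x <= 1) -> (0 < K)%N ->
  measurable_fun [set: T] (fun x => stair K (h x)).
Proof.
move=> hG h01 K0; rewrite (funext (fun x => @stair_indicE h K x K0 (h01 x))).
apply: measurable_funM; first exact: measurable_cst.
by apply: measurable_sum => j; apply/measurable_indicP/G_meas/hG; exact: measurable_itv.
Qed.

Lemma cond_exp_stair (h : T -> R) K : G_measurable G h -> (forall x, 0 <= h x <= 1) -> (0 < K)%N ->
  \int[P]_x (stair K (h x) * Z x) = 0.
Proof.
move=> hG h01 K0; pose A j := h @^-1` `[(j.+1)%:R / K%:R, +oo[.
have GA j : G (A j) by apply: hG; exact: measurable_itv.
under eq_Rintegral do rewrite stair_indicE // -mulrA.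
by rewrite RintegralZl ?(cond_exp_indic_sum (A := A)) ?mulr0 //; exact: (integrable_indic_sum_mul (A := A)).
Qed.

Lemma cond_exp_weighted (h : T -> R) : G_measurable G h -> (forall x, 0 <= h x <= 1) ->
  \int[P]_x (h x * Y x) = \int[P]_x (h x * X x).
Proof.
move=> hG h01; have mh := measurable_G hG.
have ih (f : T -> R) : P.-integrable [set: T] (EFin \o f) ->
    P.-integrable [set: T] (EFin \o (fun x => h x * f x)).
  by apply: (integrable_bounded_mul (M := 1)) => // x; case/andP: (h01 x) => ? ?; rewrite ger0_norm.
suff hZ0 : \int[P]_x (h x * Z x) = 0.
  apply/eqP; rewrite -subr_eq0 -RintegralB ?ih //; apply/eqP; rewrite -hZ0.
  by apply: eq_Rintegral => x _; rewrite /Z mulrBr.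
apply/normr0_eq0/(le_inv_nat_mul_eq0 (c := \int[P]_x `|Z x|) (normr_ge0 _)) => K K0.
pose s x := stair K (h x); have ms : measurable_fun [set: T] s by exact: measurable_stair.
have hs x : 0 <= h x - s x <= K%:R^-1 by case/andP: (h01 x) => hx0 _; exact: stair_approx.
have isZ : P.-integrable [set: T] (EFin \o (fun x => s x * Z x)).
  apply: (integrable_bounded_mul (M := 1)) => // x; rewrite ger0_norm ?stair_ge0 //.
  by case/andP: (h01 x) (hs x) => _ hx1 /andP[+ _]; rewrite subr_ge0 => /le_trans; apply.
have ihsZ : P.-integrable [set: T] (EFin \o (fun x => (h x - s x) * Z x)).
  apply: (integrable_bounded_mul (M := K%:R^-1)) => //; first exact: measurable_funB.
  by move=> x; case/andP: (hs x) => ? ?; rewrite ger0_norm.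
have -> : \int[P]_x (h x * Z x) = \int[P]_x ((h x - s x) * Z x) + \int[P]_x (s x * Z x).
  by rewrite -RintegralD //; apply: eq_Rintegral => x _; ring.
rewrite cond_exp_stair // addr0 -RintegralZl //; last exact: integrable_norm.
apply: le_trans (le_normr_Rintegral _ ihsZ) _ => //; apply: le_Rintegral => //.
- exact: integrable_norm.
- apply: (integrable_bounded_mul (M := K%:R^-1)) (integrable_norm iZ) => //.
  by move=> x; rewrite ger0_norm.
- by move=> x _; rewrite normrM ler_wpM2r //; case/andP: (hs x) => ? ?; rewrite ger0_norm.
Qed.

End cond_exp_weighted.

Lemma G_measurable_g_sigmaP {d} {T : measurableType d} {R : realType} (S : set (set T)) (f : T -> R) :
  G_measurable <<s S>> f <-> measurable_fun [set: g_sigma_algebraType S] f.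
Proof. by split=> mf => [_ B mB|B mB]; [rewrite setTI; exact: mf|rewrite -[_ @^-1` _]setTI; exact: mf]. Qed.

Section tilde_process.
Context d (T : measurableType d) {R : realType} (P : probability T R).
Variables L U Ls Us : nat -> T -> R.
Hypotheses (mL : forall n, measurable_fun [set: T] (L n))
  (mU : forall n, measurable_fun [set: T] (U n))
  (L0 : L 0%N = (fun _ => 0)) (U0 : U 0%N = (fun _ => 1))
  (L01 : forall n, {ae P, forall x, 0 <= L n x <= 1})
  (U01 : forall n, {ae P, forall x, 0 <= U n x <= 1})
  (LU : forall n, {ae P, forall x, L n x <= U n x})
  (Ls_cond : forall k, is_cond_exp P (Ftail L U k.+1) (L k) (Ls k.+1))
  (Us_cond : forall k, is_cond_exp P (Ftail L U k.+1) (U k) (Us k.+1))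
  (Ls_le : forall k, {ae P, forall x, Ls k.+1 x <= L k.+1 x})
  (Us_ge : forall k, {ae P, forall x, U k.+1 x <= Us k.+1 x})
  (Ls_lt : forall k, {ae P, forall x, Ls k.+1 x < Us k.+1 x}).

Let tail k : set (set T) := [set A | exists f,
  (exists j, (k <= j)%N /\ (f = L j \/ f = U j)) /\
  exists B : set R, measurable B /\ A = f @^-1` B].
Local Notation FT k := (g_sigma_algebraType (tail k)).

Let Ftail_measurable k : Ftail L U k `<=` measurable.
Proof.
apply: smallest_sub; first exact: sigma_algebra_measurable.
by move=> _ [f [[j [_ [->|->]]] [B [mB ->]]]]; rewrite -[_ @^-1` _]setTI; [exact: mL|exact: mU].
Qed.

Let measurable_FT k (f : T -> R) : measurable_fun [set: FT k] f -> measurable_fun [set: T] f.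
Proof. by move=> mf _ B mB; apply: Ftail_measurable; exact: mf. Qed.

Let measurable_FT_le k j (f : T -> R) : (k <= j)%N ->
  measurable_fun [set: FT j] f -> measurable_fun [set: FT k] f.
Proof.
move=> kj mf _ B mB; move: (mf measurableT B mB); apply: smallest_sub.
  exact: smallest_sigma_algebra.
move=> A [g [[i [ji gLU]] gB]]; apply: sub_sigma_algebra.
by exists g; split => //; exists i; split => //; exact: leq_trans ji.
Qed.

Let measurable_FT_L k : measurable_fun [set: FT k] (L k).
Proof.
move=> _ B mB; rewrite setTI; apply: sub_sigma_algebra.
by exists (L k); split; [exists k; split => //; left|exists B].
Qed.

Let measurable_FT_U k : measurable_fun [set: FT k] (U k).
Proof.
move=> _ B mB; rewrite setTI; apply: sub_sigma_algebra.
by exists (U k); split; [exists k; split => //; right|exists B].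
Qed.

Let measurable_FT_Ls k : measurable_fun [set: FT k.+1] (Ls k.+1).
Proof. by case: (Ls_cond k) => /G_measurable_g_sigmaP. Qed.

Let measurable_FT_Us k : measurable_fun [set: FT k.+1] (Us k.+1).
Proof. by case: (Us_cond k) => /G_measurable_g_sigmaP. Qed.

Local Notation tL := (tildeL L U Ls Us).
Local Notation tU := (tildeU L U Ls Us).
Let ratioL k x := (L k.+1 x - Ls k.+1 x) / (Us k.+1 x - Ls k.+1 x).
Let ratioU k x := (Us k.+1 x - U k.+1 x) / (Us k.+1 x - Ls k.+1 x).

Let bracketed x := forall k, [/\ Ls k.+1 x <= L k.+1 x, L k.+1 x <= U k.+1 x,
  U k.+1 x <= Us k.+1 x & Ls k.+1 x < Us k.+1 x].

Let ae_bracketed : {ae P, forall x, bracketed x}.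
Proof.
apply: ae_foralln => k; near=> x.
by split; near: x; [exact: Ls_le|exact: LU|exact: Us_ge|exact: Ls_lt].
Unshelve. all: by end_near.
Qed.

Let tilde_itv x : bracketed x -> forall m, 0 <= tL m x <= tU m x /\ tU m x <= 1.
Proof.
move=> bx; elim=> [|m [tLU tU1]]; first by rewrite /= ler01 lexx.
have [b1 b2 b3 b4] := bx m.
have [tl0 tl_le tl_tu tu_le tu1] := tilde_step_mono b1 b2 b3 b4 tLU tU1.
by split; [apply/andP; split|]; [exact: le_trans tl0 tl_le|exact: tl_tu|exact: le_trans tu_le tu1].
Qed.

Let measurable_ratioL k : measurable_fun [set: FT k.+1] (ratioL k).
Proof. by apply: measurable_fun_ratio; apply: measurable_funB. Qed.

Let measurable_ratioU k : measurable_fun [set: FT k.+1] (ratioU k).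
Proof. by apply: measurable_fun_ratio; apply: measurable_funB. Qed.

Let ae_ratio k : {ae P, forall x, [/\ 0 <= ratioL k x <= 1, 0 <= ratioU k x <= 1,
  ratioL k x * (Us k.+1 x - Ls k.+1 x) = L k.+1 x - Ls k.+1 x &
  ratioU k x * (Us k.+1 x - Ls k.+1 x) = Us k.+1 x - U k.+1 x]}.
Proof.
apply: filterS ae_bracketed => x /(_ k) [b1 b2 b3 b4].
have [rL rU] := tilde_step_ratio_itv01 b1 b2 b3 b4.
by split=> //; rewrite divfK // subr_eq0 gt_eqF.
Qed.

Let measurable_tilde m : measurable_fun [set: T] (tL m) /\ measurable_fun [set: T] (tU m).
Proof.
elim: m => [|m [mtL mtU]]; first by split; exact: measurable_cst.
have mgap := measurable_funB mtU mtL.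
split; [apply: measurable_funD mtL _|apply: measurable_funB mtU _];
  apply: measurable_funM mgap; apply: measurable_FT; [exact: measurable_ratioL|exact: measurable_ratioU].
Qed.

Let integrable_L k : P.-integrable [set: T] (EFin \o L k).
Proof.
apply: (integrable_bounded_ae (M := 1)) => //.
by apply: filterS (L01 k) => x /andP[? ?]; rewrite ger0_norm.
Qed.

Let integrable_U k : P.-integrable [set: T] (EFin \o U k).
Proof.
apply: (integrable_bounded_ae (M := 1)) => //.
by apply: filterS (U01 k) => x /andP[? ?]; rewrite ger0_norm.
Qed.

Let integrable_tilde m :
  P.-integrable [set: T] (EFin \o tL m) /\ P.-integrable [set: T] (EFin \o tU m).
Proof.
have [mtL mtU] := measurable_tilde m.
split; apply: (integrable_bounded_ae (M := 1)) => //; apply: filterS ae_bracketed => x bx;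
  have [/andP[tL0 tLU] tU1] := tilde_itv bx m.
- by rewrite ger0_norm // (le_trans tLU).
- by rewrite ger0_norm // (le_trans tL0).
Qed.

Let Ls_weighted k (h : T -> R) : measurable_fun [set: FT k.+1] h -> (forall x, 0 <= h x <= 1) ->
  \int[P]_x (h x * Ls k.+1 x) = \int[P]_x (h x * L k x).
Proof.
move=> /G_measurable_g_sigmaP hG h01.
by apply: (cond_exp_weighted _ (integrable_L k) (Ls_cond k)) => //; exact: Ftail_measurable.
Qed.

Let Us_weighted k (h : T -> R) : measurable_fun [set: FT k.+1] h -> (forall x, 0 <= h x <= 1) ->
  \int[P]_x (h x * Us k.+1 x) = \int[P]_x (h x * U k x).
Proof.
move=> /G_measurable_g_sigmaP hG h01.
by apply: (cond_exp_weighted _ (integrable_U k) (Us_cond k)) => //; exact: Ftail_measurable.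
Qed.

Let integrable_Ls k : P.-integrable [set: T] (EFin \o Ls k.+1).
Proof. by case: (Ls_cond k). Qed.

Let integrable_Us k : P.-integrable [set: T] (EFin \o Us k.+1).
Proof. by case: (Us_cond k). Qed.

Let integrable_weighted (h f : T -> R) : measurable_fun [set: T] h ->
  (forall x, 0 <= h x <= 1) -> P.-integrable [set: T] (EFin \o f) ->
  P.-integrable [set: T] (EFin \o (fun x => h x * f x)).
Proof.
move=> mh h01; apply: (integrable_bounded_mul (M := 1)) => // x.
by case/andP: (h01 x) => ? ?; rewrite ger0_norm.
Qed.

Let tilde_agree m := forall h : T -> R, measurable_fun [set: FT m] h ->
  (forall x, 0 <= h x <= 1) ->
  \int[P]_x (h x * tL m x) = \int[P]_x (h x * L m x) /\
  \int[P]_x (h x * tU m x) = \int[P]_x (h x * U m x).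

Let tilde_gap_weighted m : tilde_agree m -> forall g : T -> R,
  measurable_fun [set: FT m.+1] g -> (forall x, 0 <= g x <= 1) ->
  \int[P]_x (g x * (tU m x - tL m x)) = \int[P]_x (g x * (Us m.+1 x - Ls m.+1 x)).
Proof.
move=> agree_m g mg g01; have ig := integrable_weighted (measurable_FT mg) g01.
have [itL itU] := integrable_tilde m.
have [agreeL agreeU] := agree_m g (measurable_FT_le (leqnSn m) mg) g01.
under eq_Rintegral do rewrite mulrBr; under [RHS]eq_Rintegral do rewrite mulrBr.
by rewrite !RintegralB ?ig // agreeL agreeU Ls_weighted // Us_weighted.
Qed.

Let integrable_increment_weighted m (h r : T -> R) :
  measurable_fun [set: FT m.+1] h -> (forall x, 0 <= h x <= 1) ->
  measurable_fun [set: FT m.+1] r -> {ae P, forall x, 0 <= r x <= 1} ->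
  P.-integrable [set: T] (EFin \o (fun x => h x * (r x * (tU m x - tL m x)))).
Proof.
move=> mh h01 mr r01; have [mtL mtU] := measurable_tilde m.
apply: (integrable_bounded_ae (M := 1)).
  exact: measurable_funM (measurable_FT mh) (measurable_funM (measurable_FT mr) (measurable_funB mtU mtL)).
apply: filterS2 r01 ae_bracketed => x /andP[r0 r1] /(tilde_itv)/(_ m) [/andP[tL0 tLU] tU1].
have /andP[h0 h1] := h01 x.
have gap1 : tU m x - tL m x <= 1 by rewrite lerBlDr (le_trans tU1) // lerDl.
rewrite ger0_norm ?mulr_ge0 ?subr_ge0 //.
by rewrite mulr_ile1 ?mulr_ge0 ?subr_ge0 // mulr_ile1 ?subr_ge0.
Qed.

Let tilde_increment_weighted m : tilde_agree m -> forall h r f : T -> R,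
  measurable_fun [set: FT m.+1] h -> (forall x, 0 <= h x <= 1) ->
  measurable_fun [set: FT m.+1] r -> measurable_fun [set: T] f ->
  {ae P, forall x, 0 <= r x <= 1 /\ r x * (Us m.+1 x - Ls m.+1 x) = f x} ->
  \int[P]_x (h x * (r x * (tU m x - tL m x))) = \int[P]_x (h x * f x).
Proof.
move=> agree_m h r f mh h01 mr mf rf.
(* [r] lies in [0,1] only almost surely, so the admissible weight is built from its clamp. *)
pose g x := h x * clamp01 (r x).
have mg : measurable_fun [set: FT m.+1] g := measurable_funM mh (measurable_fun_clamp01 mr).
have g01 x : 0 <= g x <= 1.
  have /andP[h0 h1] := h01 x; have /andP[c0 c1] := clamp01_itv (r x).
  by rewrite mulr_ge0 // mulr_ile1.
have [mtL mtU] := measurable_tilde m.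
have mhT := measurable_FT mh; have mrT := measurable_FT mr; have mgT := measurable_FT mg.
have mLs := measurable_FT (@measurable_FT_Ls m); have mUs := measurable_FT (@measurable_FT_Us m).
transitivity (\int[P]_x (g x * (tU m x - tL m x))).
  apply: Rintegral_ae_eq.
  - exact/measurable_funM/measurable_funM/measurable_funB.
  - exact/measurable_funM/measurable_funB.
  by apply: filterS rf => x [/clamp01_id rx _]; rewrite /g rx mulrA.
rewrite tilde_gap_weighted //; apply: Rintegral_ae_eq.
- exact/measurable_funM/measurable_funB.
- exact: measurable_funM.
by apply: filterS rf => x [/clamp01_id rx <-]; rewrite /g rx mulrA.
Qed.

Let tilde_agreeS m : tilde_agree m -> tilde_agree m.+1.
Proof.
move=> agree_m h mh h01; have mhT := measurable_FT mh.
have [agreeL agreeU] := agree_m h (measurable_FT_le (leqnSn m) mh) h01.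
have [itL itU] := integrable_tilde m; have ih := integrable_weighted mhT h01.
have mLs := measurable_FT (@measurable_FT_Ls m); have mUs := measurable_FT (@measurable_FT_Us m).
have [rL rU] : {ae P, forall x, 0 <= ratioL m x <= 1} /\ {ae P, forall x, 0 <= ratioU m x <= 1}.
  by split; apply: filterS (ae_ratio m) => x [].
split.
- transitivity (\int[P]_x (h x * tL m x) + \int[P]_x (h x * (ratioL m x * (tU m x - tL m x)))).
    rewrite -RintegralD //; [|exact: ih|exact: integrable_increment_weighted rL].
    by apply: eq_Rintegral => x _; exact: mulrDr.
  rewrite agreeL -Ls_weighted // (tilde_increment_weighted
    (f := fun x => L m.+1 x - Ls m.+1 x) agree_m mh h01 (@measurable_ratioL m)); first last.
  - by apply: filterS (ae_ratio m) => x [].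
  - exact: measurable_funB.
  rewrite -RintegralD //; [|exact: ih|exact/ih/integrable_subr].
  by apply: eq_Rintegral => x _; ring.
- transitivity (\int[P]_x (h x * tU m x) - \int[P]_x (h x * (ratioU m x * (tU m x - tL m x)))).
    rewrite -RintegralB //; [|exact: ih|exact: integrable_increment_weighted rU].
    by apply: eq_Rintegral => x _; exact: mulrBr.
  rewrite agreeU -Us_weighted // (tilde_increment_weighted
    (f := fun x => Us m.+1 x - U m.+1 x) agree_m mh h01 (@measurable_ratioU m)); first last.
  - by apply: filterS (ae_ratio m) => x [].
  - exact: measurable_funB.
  rewrite -RintegralB //; [|exact: ih|exact/ih/integrable_subr].
  by apply: eq_Rintegral => x _; ring.
Qed.

Let tilde_agree_all m : tilde_agree m.
Proof. by elim: m => [|m /tilde_agreeS //] h _ _; rewrite L0 U0. Qed.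

Lemma tilde_expectation n :
  ('E_P[tL n] = 'E_P[L n])%E /\ ('E_P[tU n] = 'E_P[U n])%E.
Proof.
have [itL itU] := integrable_tilde n.
have one01 (x : T) : 0 <= cst (1 : R) x <= 1 by rewrite /= ler01 lexx.
have [agreeL agreeU] := @tilde_agree_all n _ (measurable_cst _) one01.
rewrite !expectation_Rintegral //; split; congr EFin.
- by under eq_Rintegral do rewrite -[tL n _]mul1r; rewrite agreeL;
    under eq_Rintegral do rewrite /= mul1r.
- by under eq_Rintegral do rewrite -[tU n _]mul1r; rewrite agreeU;
    under eq_Rintegral do rewrite /= mul1r.
Qed.

Lemma tilde_step_ae m : {ae P, forall x,
  [/\ 0 <= tL m x, tL m x <= tL m.+1 x, tL m.+1 x <= tU m.+1 x, tU m.+1 x <= tU m x &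
      tU m x <= 1] /\
  tU m.+1 x - tL m.+1 x = (tU m x - tL m x) * ((U m.+1 x - L m.+1 x) / (Us m.+1 x - Ls m.+1 x))}.
Proof.
apply: filterS ae_bracketed => x bx; have [b1 b2 b3 b4] := bx m.
have [tLU tU1] := tilde_itv bx m.
by split; [exact: tilde_step_mono|exact: tilde_step_gap].
Qed.

End tilde_process.

Theorem mainTheorem4 (d : measure_display) (T : measurableType d) (R : realType)
  (P : probability T R) (s : R) (L U Ls Us : nat -> T -> R) :
  0 <= s <= 1 ->
  (forall n, measurable_fun setT (L n)) ->
  (forall n, measurable_fun setT (U n)) ->
  L 0%N = (fun _ => 0) -> U 0%N = (fun _ => 1) ->
  (forall n, {ae P, forall x, L n x <= U n x}) ->
  (forall n, {ae P, forall x, 0 <= L n x <= 1}) ->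
  (forall n, {ae P, forall x, 0 <= U n x <= 1}) ->
  (forall n, ('E_P[L n] <= 'E_P[L n.+1])%E) ->
  ('E_P[L n] @[n --> \oo] --> s%:E)%E ->
  (forall n, ('E_P[U n.+1] <= 'E_P[U n])%E) ->
  ('E_P[U n] @[n --> \oo] --> s%:E)%E ->
  (forall n, (0 < n)%N ->
     [/\ is_cond_exp P (Fn L U n) (L n.-1) (Ls n),
         is_cond_exp P (Ftail L U n) (L n.-1) (Ls n) &
         {ae P, forall x, Ls n x <= L n x}]) ->
  (forall n, (0 < n)%N ->
     [/\ is_cond_exp P (Fn L U n) (U n.-1) (Us n),
         is_cond_exp P (Ftail L U n) (U n.-1) (Us n) &
         {ae P, forall x, U n x <= Us n x}]) ->
  (forall n, (0 < n)%N -> {ae P, forall x, Ls n x < Us n x}) ->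
  forall n, (0 < n)%N ->
    [/\ {ae P, forall x,
           [/\ 0 <= tildeL L U Ls Us n.-1 x,
               tildeL L U Ls Us n.-1 x <= tildeL L U Ls Us n x,
               tildeL L U Ls Us n x <= tildeU L U Ls Us n x,
               tildeU L U Ls Us n x <= tildeU L U Ls Us n.-1 x &
               tildeU L U Ls Us n.-1 x <= 1]
           /\ tildeU L U Ls Us n x - tildeL L U Ls Us n x =
              (tildeU L U Ls Us n.-1 x - tildeL L U Ls Us n.-1 x) *
              ((U n x - L n x) / (Us n x - Ls n x))},
        ('E_P[tildeL L U Ls Us n] = 'E_P[L n])%E &
        ('E_P[tildeU L U Ls Us n] = 'E_P[U n])%E].
Proof.
move=> _ mL mU L0 U0 LU L01 U01 _ _ _ _ Ls_hyp Us_hyp Ls_lt [//|m] _.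
have Ls_cond k : is_cond_exp P (Ftail L U k.+1) (L k) (Ls k.+1) by case: (Ls_hyp k.+1 isT).
have Us_cond k : is_cond_exp P (Ftail L U k.+1) (U k) (Us k.+1) by case: (Us_hyp k.+1 isT).
have Ls_le k : {ae P, forall x, Ls k.+1 x <= L k.+1 x} by case: (Ls_hyp k.+1 isT).
have Us_ge k : {ae P, forall x, U k.+1 x <= Us k.+1 x} by case: (Us_hyp k.+1 isT).
have Ls_lt' k : {ae P, forall x, Ls k.+1 x < Us k.+1 x} by exact: Ls_lt.
have [EL EU] :=
  tilde_expectation mL mU L0 U0 L01 U01 LU Ls_cond Us_cond Ls_le Us_ge Ls_lt' m.+1.
by split=> //; exact: tilde_step_ae LU Ls_le Us_ge Ls_lt' m.
Qed.
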